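(* For every type $T$ there is a natural number $d$ and: an injective map $\mathsf{Convert}$ from nested relations of type $T$ to nested relations of the monadic type $\mathfrak U_d$ that is definable by an $\mathrm{NRC}$ expression; an $\mathrm{NRC}[\mathsf{get}]$ expression $\mathsf{Convert}^{-1}$ from $\mathfrak U_d$ to $T$ such that $\mathsf{Convert}^{-1}(\mathsf{Convert}(x))=x$ for every nested relation $x$ of type $T$; and a $\Delta_0$ formula $\mathrm{Im}_{\mathsf{Convert}}(y)$ with $y$ of type $\mathfrak U_d$ such that $\mathrm{Im}_{\mathsf{Convert}}(y)$ holds if and only if $y=\mathsf{Convert}(x)$ for some nested relation $x$ of type $T$. (Applying this componentwise, the same holds for any nested relational schema, i.e. any finite list of typed variables, mapped to a schema all of whose types are monadic.)
   Context: Types: $T,U ::= \mathfrak U \mid \mathsf{Unit}\mid T\times U\mid \mathsf{Set}(T)$ interpreted as nested relations (atoms, one-element set, products, all subsets). Monadic types: $\mathfrak U_0 := \mathfrak U$, $\mathfrak U_{n+1} := \mathsf{Set}(\mathfrak U_n)$. $\Delta_0$ formulas: built from $t=_{\mathfrak U}u$, $t\neq_{\mathfrak U}u$, $\top,\bot$ with $\wedge,\vee$ and bounded quantifiers $\forall x\in t$, $\exists x\in t$ over terms built from variables by $\langle\rangle$, pairing and projections. $\mathrm{NRC}[\mathsf{get}]$: typed expressions built from variables, $\langle\rangle$, pairing, projections, $\emptyset$, singleton, $\cup$, $\setminus$, big union $\bigcup\{E_1\mid x\in E_2\}$, and $\mathsf{get}_T(E)$ (the unique element of a singleton $E$, a fixed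 default otherwise); $\mathrm{NRC}$ is the fragment without $\mathsf{get}$. *)

From Stdlib Require Import List ClassicalEpsilon.
Import ListNotations.
Set Implicit Arguments.

Inductive ty : Type :=
| TUr : ty
| TUnit : ty
| TProd : ty -> ty -> ty
| TSet : ty -> ty.

Fixpoint mon (n : nat) : ty :=
  match n with O => TUr | S n => TSet (mon n) end.

(* Interpretation as nested relations over a universe of atoms U:
   sets of type Set(T) are arbitrary subsets, represented as predicates. *)
Fixpoint sem (U : Type) (t : ty) : Type :=
  match t with
  | TUr => U
  | TUnit => unit
  | TProd a b => (sem U a * sem U b)%type
  | TSet a => sem U a -> Prop
  end.

Inductive var : list ty -> ty -> Type :=
| Vz : forall G t, var (t :: G) t
| Vs : forall G t s, var G t -> var (s :: G) t.

Fixpoint env (U : Type) (G : list ty) : Type :=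
  match G with nil => unit | t :: G => (sem U t * env U G)%type end.

Fixpoint lookup {U : Type} {G t} (v : var G t) : env U G -> sem U t :=
  match v in var G t return env U G -> sem U t with
  | Vz _ _ => fun e => fst e
  | Vs _ v => fun e => lookup v (snd e)
  end.

Inductive expr : list ty -> ty -> Type :=
| EVar : forall G t, var G t -> expr G t
| EUnit : forall G, expr G TUnit
| EPair : forall G a b, expr G a -> expr G b -> expr G (TProd a b)
| EFst : forall G a b, expr G (TProd a b) -> expr G a
| ESnd : forall G a b, expr G (TProd a b) -> expr G b
| EEmpty : forall G t, expr G (TSet t)
| ESing : forall G t, expr G t -> expr G (TSet t)
| EUnion : forall G t, expr G (TSet t) -> expr G (TSet t) -> expr G (TSet t)
| EDiff : forall G t, expr G (TSet t) -> expr G (TSet t) -> expr G (TSet t)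
(* EBigUnion E1 E2 = \bigcup { E1 | x in E2 }, x bound (index 0) in E1 *)
| EBigUnion : forall G s t, expr (s :: G) (TSet t) -> expr G (TSet s) -> expr G (TSet t)
| EGet : forall G t, expr G (TSet t) -> expr G t.

Fixpoint get_free {G t} (e : expr G t) : Prop :=
  match e with
  | EVar _ => True
  | EUnit _ => True
  | EPair e1 e2 => get_free e1 /\ get_free e2
  | EFst e1 => get_free e1
  | ESnd e1 => get_free e1
  | EEmpty _ _ => True
  | ESing e1 => get_free e1
  | EUnion e1 e2 => get_free e1 /\ get_free e2
  | EDiff e1 e2 => get_free e1 /\ get_free e2
  | EBigUnion e1 e2 => get_free e1 /\ get_free e2
  | EGet _ => False
  end.

Fixpoint default {U : Type} (u0 : U) (t : ty) : sem U t :=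
  match t return sem U t with
  | TUr => u0
  | TUnit => tt
  | TProd a b => (default u0 a, default u0 b)
  | TSet a => fun _ => False
  end.

Lemma ex_of_unique (A : Type) (P : A -> Prop) : (exists! x, P x) -> exists x, P x.
Proof. intros [x [Hx _]]; exists x; exact Hx. Qed.

(* get: the unique element of a singleton, the default otherwise *)
Definition get_val {U : Type} (u0 : U) {t : ty} (A : sem U t -> Prop) : sem U t :=
  match excluded_middle_informative (exists! x, A x) with
  | left h => proj1_sig (constructive_indefinite_description _ (@ex_of_unique _ _ h))
  | right _ => default u0 t
  end.

Fixpoint eval {U : Type} (u0 : U) {G t} (e : expr G t) : env U G -> sem U t :=
  match e in expr G t return env U G -> sem U t with
  | EVar v => fun r => lookup v r
  | EUnit _ => fun _ => tt
  | EPair e1 e2 => fun r => (eval u0 e1 r, eval u0 e2 r)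
  | EFst e1 => fun r => fst (eval u0 e1 r)
  | ESnd e1 => fun r => snd (eval u0 e1 r)
  | EEmpty _ _ => fun _ _ => False
  | ESing e1 => fun r y => y = eval u0 e1 r
  | EUnion e1 e2 => fun r y => eval u0 e1 r y \/ eval u0 e2 r y
  | EDiff e1 e2 => fun r y => eval u0 e1 r y /\ ~ eval u0 e2 r y
  | EBigUnion e1 e2 => fun r y =>
      exists x, eval u0 e2 r x /\ eval u0 e1 (x, r) y
  | EGet e1 => fun r => get_val u0 (eval u0 e1 r)
  end.

Inductive term : list ty -> ty -> Type :=
| TmVar : forall G t, var G t -> term G t
| TmUnit : forall G, term G TUnit
| TmPair : forall G a b, term G a -> term G b -> term G (TProd a b)
| TmFst : forall G a b, term G (TProd a b) -> term G a
| TmSnd : forall G a b, term G (TProd a b) -> term G b.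

Fixpoint teval {U : Type} {G t} (m : term G t) : env U G -> sem U t :=
  match m in term G t return env U G -> sem U t with
  | TmVar v => fun r => lookup v r
  | TmUnit _ => fun _ => tt
  | TmPair m1 m2 => fun r => (teval m1 r, teval m2 r)
  | TmFst m1 => fun r => fst (teval m1 r)
  | TmSnd m1 => fun r => snd (teval m1 r)
  end.

(* Delta_0 formulas; bounded quantifiers bind index 0 *)
Inductive d0 : list ty -> Type :=
| FEqU : forall G, term G TUr -> term G TUr -> d0 G
| FNeqU : forall G, term G TUr -> term G TUr -> d0 G
| FTrue : forall G, d0 G
| FFalse : forall G, d0 G
| FAnd : forall G, d0 G -> d0 G -> d0 G
| FOr : forall G, d0 G -> d0 G -> d0 G
| FForallIn : forall G s, term G (TSet s) -> d0 (s :: G) -> d0 G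
| FExistsIn : forall G s, term G (TSet s) -> d0 (s :: G) -> d0 G.

Fixpoint holds {U : Type} {G} (f : d0 G) : env U G -> Prop :=
  match f in d0 G return env U G -> Prop with
  | FEqU m1 m2 => fun r => teval m1 r = teval m2 r
  | FNeqU m1 m2 => fun r => teval m1 r <> teval m2 r
  | FTrue _ => fun _ => True
  | FFalse _ => fun _ => False
  | FAnd f1 f2 => fun r => holds f1 r /\ holds f2 r
  | FOr f1 f2 => fun r => holds f1 r \/ holds f2 r
  | FForallIn m f1 => fun r => forall x, teval m r x -> holds f1 (x, r)
  | FExistsIn m f1 => fun r => exists x, teval m r x /\ holds f1 (x, r)
  end.

(* A nested relation of type T is coded as a pure set of uniform rank: an atom a
   becomes the iterated singleton {..{a}..}, the unit value the empty set, a set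
   the set of the codes of its elements, and a pair the Kuratowski pair
   {{A},{A,B}} of the codes of its components, all padded to a common rank
   above depth T.  Coding uses only singletons, unions and big unions, so it is
   an NRC expression.  Decoding undoes each constructor: iterated get for atoms,
   big union for sets, and for a Kuratowski pair p the first component is the
   unique element of the intersection of p, the second the unique element of
   (union p) minus (intersection p), or of the intersection when that
   difference is empty.  The image of the coding is cut out by the same
   recursion in Delta_0, since equality at monadic types, singletons and
   two-element sets are all expressible with bounded quantifiers. *)

From Stdlib Require Import List Lia Classical ClassicalEpsilon FunctionalExtensionality PropExtensionality.
Import ListNotations.

Lemma pred_ext {A : Type} (P Q : A -> Prop) : (forall x, P x <-> Q x) -> P = Q.
Proof.
  intro H; apply functional_extensionality; intro x.
  apply propositional_extensionality; apply H.
Qed.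

Fixpoint depth (T : ty) : nat :=
  match T with
  | TUr | TUnit => 0
  | TSet a => S (depth a)
  | TProd a b => S (S (Nat.max (depth a) (depth b)))
  end.

Section Coding.
Variable U : Type.

Fixpoint iter_sing (L : nat) (a : U) : sem U (mon (S L)) :=
  match L return sem U (mon (S L)) with
  | 0 => fun y => y = a
  | S L => fun y => y = iter_sing L a
  end.

Definition kpair {K : ty} (A B : sem U K) : sem U (TSet (TSet K)) :=
  fun w => w = (fun u => u = A) \/ w = (fun u => u = A \/ u = B).

(* Components of too small a rank are coded by junk; [depth T <= L] rules it out. *)
Fixpoint encode (T : ty) : forall L, sem U T -> sem U (mon (S L)) :=
  match T return forall L, sem U T -> sem U (mon (S L)) with
  | TUr => fun L a => iter_sing L a
  | TUnit => fun L _ _ => False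
  | TSet a => fun L =>
      match L return sem U (TSet a) -> sem U (mon (S L)) with
      | 0 => fun _ _ => False
      | S L' => fun X w => exists x, X x /\ w = encode a L' x
      end
  | TProd a b => fun L =>
      match L return sem U (TProd a b) -> sem U (mon (S L)) with
      | S (S L') => fun p => kpair (encode a L' (fst p)) (encode b L' (snd p))
      | _ => fun _ _ => False
      end
  end.

Lemma kpair_bigcup {K : ty} (A B z : sem U K) :
  (exists w, kpair A B w /\ w z) <-> z = A \/ z = B.
Proof.
  unfold kpair; split.
  - intros [w [[-> | ->] Hz]]; auto.
  - intros [-> | ->].
    + exists (fun u => u = A); auto.
    + exists (fun u => u = A \/ u = B); auto.
Qed.

Lemma kpair_bigcap {K : ty} (A B z : sem U K) :
  (forall w, kpair A B w -> w z) <-> z = A.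
Proof.
  unfold kpair; split.
  - intro H; apply (H (fun u => u = A)); auto.
  - intros -> w [-> | ->]; auto.
Qed.

End Coding.

Arguments iter_sing {U} L a.
Arguments kpair {U K} A B.
Arguments encode {U} T L x.

Fixpoint iter_singE (L : nat) : forall G, expr G TUr -> expr G (mon (S L)) :=
  match L with
  | 0 => fun G e => ESing e
  | S L => fun G e => ESing (iter_singE L G e)
  end.

Definition kpairE {G K} (e1 e2 : expr G K) : expr G (TSet (TSet K)) :=
  EUnion (ESing (ESing e1)) (ESing (EUnion (ESing e1) (ESing e2))).

Fixpoint encodeE (T : ty) : forall L G, expr G T -> expr G (mon (S L)) :=
  match T with
  | TUr => iter_singE
  | TUnit => fun L G _ => EEmpty G (mon L)
  | TSet a => fun L =>
      match L with
      | 0 => fun G _ => EEmpty G TUr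
      | S L' => fun G e => EBigUnion (ESing (encodeE a L' _ (EVar (Vz _ _)))) e
      end
  | TProd a b => fun L =>
      match L with
      | S (S L') => fun G e => kpairE (encodeE a L' G (EFst e)) (encodeE b L' G (ESnd e))
      | _ => fun G _ => EEmpty G _
      end
  end.

Section EncodeSemantics.
Variables (U : Type) (u0 : U).

Lemma eval_iter_singE L : forall G (e : expr G TUr) r,
  eval u0 (iter_singE L G e) r = iter_sing L (eval u0 e r).
Proof. induction L; intros; simpl; [|rewrite IHL]; reflexivity. Qed.

Lemma eval_encodeE T : forall L G (e : expr G T) r,
  eval u0 (encodeE T L G e) r = encode T L (eval u0 e r).
Proof.
  induction T as [| |a IHa b IHb|a IHa]; intros L G e r.
  - apply eval_iter_singE.
  - reflexivity.
  - destruct L as [|[|L]]; try reflexivity.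
    cbn [encodeE encode kpairE eval].
    rewrite (IHa L G (EFst e) r), (IHb L G (ESnd e) r); reflexivity.
  - destruct L as [|L]; try reflexivity.
    cbn [encodeE eval encode]; apply pred_ext; intro w.
    setoid_rewrite IHa; reflexivity.
Qed.

End EncodeSemantics.

Lemma get_free_iter_singE L : forall G (e : expr G TUr),
  get_free e -> get_free (iter_singE L G e).
Proof. induction L; simpl; auto. Qed.

Lemma get_free_encodeE T : forall L G (e : expr G T),
  get_free e -> get_free (encodeE T L G e).
Proof.
  induction T as [| |a IHa b IHb|a IHa]; intros L G e He; simpl.
  - apply get_free_iter_singE; exact He.
  - exact I.
  - destruct L as [|[|L]]; simpl; auto.
    repeat split; first [apply IHa | apply IHb]; exact He.
  - destruct L; simpl; auto.
    split; [apply IHa; exact I | exact He].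
Qed.

Definition letE {G s t} (e : expr G s) (f : expr (s :: G) t) : expr G t :=
  EGet (EBigUnion (ESing f) (ESing e)).

Definition bigcupE {G K} (e : expr G (TSet (TSet K))) : expr G (TSet K) :=
  EBigUnion (EVar (Vz G (TSet K))) e.

(* The union of [p] minus the points that some member of [p] misses. *)
Definition bigcapE {G K} (p : var G (TSet (TSet K))) : expr G (TSet K) :=
  EDiff (bigcupE (EVar p))
        (EBigUnion (EDiff (bigcupE (EVar (Vs (TSet K) p))) (EVar (Vz G (TSet K)))) (EVar p)).

Definition emptyTestE {G K} (e : expr G (TSet K)) : expr G (TSet TUnit) :=
  EDiff (ESing (EUnit G)) (EBigUnion (ESing (EUnit _)) e).

Definition kfstE {G K} (p : var G (TSet (TSet K))) : expr G (TSet K) := bigcapE p.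

Definition kdiffE {G K} (p : var G (TSet (TSet K))) : expr G (TSet K) :=
  EDiff (bigcupE (EVar p)) (bigcapE p).

Definition ksndE {G K} (p : var G (TSet (TSet K))) : expr G (TSet K) :=
  EUnion (kdiffE p) (EBigUnion (bigcapE (Vs TUnit p)) (emptyTestE (kdiffE p))).

Fixpoint unsingE (L : nat) : forall G, var G (mon (S L)) -> expr G TUr :=
  match L with
  | 0 => fun G v => EGet (EVar v)
  | S L => fun G v => letE (EGet (EVar v)) (unsingE L _ (Vz G _))
  end.

Fixpoint decodeE (T : ty) : forall L G, var G (mon (S L)) -> expr G T :=
  match T with
  | TUr => unsingE
  | TUnit => fun L G _ => EUnit G
  | TSet a => fun L =>
      match L with
      | 0 => fun G _ => EEmpty G a
      | S L' => fun G v => EBigUnion (ESing (decodeE a L' _ (Vz G _))) (EVar v)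
      end
  | TProd a b => fun L =>
      match L with
      | S (S L') => fun G p =>
          EPair (letE (EGet (kfstE p)) (decodeE a L' _ (Vz G _)))
                (letE (EGet (ksndE p)) (decodeE b L' _ (Vz G _)))
      | _ => fun G _ => EGet (EEmpty G _)
      end
  end.

Section DecodeSemantics.
Variables (U : Type) (u0 : U).

Lemma get_val_singleton t (P : sem U t -> Prop) a :
  (forall z, P z <-> z = a) -> get_val u0 P = a.
Proof.
  intro H; unfold get_val.
  destruct excluded_middle_informative as [h|h].
  - destruct constructive_indefinite_description as [x Hx]; apply H; exact Hx.
  - exfalso; apply h; exists a; split.
    + apply H; reflexivity.
    + intros y Hy; symmetry; apply H; exact Hy.
Qed.

Lemma eval_letE {G s t} (e : expr G s) (f : expr (s :: G) t) r :
  eval u0 (letE e f) r = eval u0 f (eval u0 e r, r).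
Proof.
  apply get_val_singleton; intro z; cbn [eval]; split.
  - intros [x [-> ->]]; reflexivity.
  - intros ->; eauto.
Qed.

Lemma eval_bigcapE {G K} (p : var G (TSet (TSet K))) r z :
  eval u0 (bigcapE p) r z <->
  (exists w, lookup p r w /\ w z) /\ (forall w, lookup p r w -> w z).
Proof.
  unfold bigcapE, bigcupE; cbn [eval lookup fst snd].
  split; intros [Hz Hall]; split; [exact Hz| |exact Hz|].
  - intros w Hw; apply NNPP; intro Hn; eauto.
  - intros [w [Hw [_ Hn]]]; exact (Hn (Hall w Hw)).
Qed.

Lemma eval_emptyTestE {G K} (e : expr G (TSet K)) r (t : unit) :
  eval u0 (emptyTestE e) r t <-> ~ exists z, eval u0 e r z.
Proof.
  destruct t; cbn [eval emptyTestE]; split.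
  - intros [_ Hn] [z Hz]; eauto.
  - intro Hn; split; [reflexivity|]; intros [z [Hz _]]; eauto.
Qed.

Section KPair.
Variables (G : list ty) (K : ty) (p : var G (TSet (TSet K))) (r : env U G) (A B : sem U K).
Hypothesis Hp : lookup p r = kpair A B.

Lemma eval_kfstE z : eval u0 (kfstE p) r z <-> z = A.
Proof.
  unfold kfstE; rewrite eval_bigcapE, Hp, kpair_bigcup, kpair_bigcap; intuition.
Qed.

Lemma eval_kdiffE z : eval u0 (kdiffE p) r z <-> z = B /\ z <> A.
Proof.
  unfold kdiffE, bigcupE; cbn [eval lookup fst snd].
  rewrite eval_kfstE; rewrite Hp, kpair_bigcup; intuition congruence.
Qed.

(* When A = B the difference is empty and the second component is read off the intersection. *)
Lemma eval_ksndE z : eval u0 (ksndE p) r z <-> z = B.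
Proof.
  unfold ksndE; cbn [eval]; setoid_rewrite eval_emptyTestE.
  rewrite eval_kdiffE; setoid_rewrite eval_kdiffE.
  assert (Hcap : forall t : unit, eval u0 (bigcapE (Vs TUnit p)) (t, r) z <-> z = A)
    by (intro t; exact (eval_kfstE z)).
  setoid_rewrite Hcap.
  destruct (classic (A = B)) as [E|E]; split.
  - intros [[H _] | [_ [_ H]]]; congruence.
  - intros ->; right; exists tt; split; [|congruence].
    intros [x [-> Hx]]; congruence.
  - intros [[H _] | [_ [Hn ->]]]; [exact H|].
    exfalso; apply Hn; exists B; split; congruence.
  - intros ->; left; split; congruence.
Qed.

End KPair.

Lemma eval_unsingE L : forall G (v : var G (mon (S L))) r a,
  lookup v r = iter_sing L a -> eval u0 (unsingE L G v) r = a.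
Proof.
  induction L as [|L IHL]; intros G v r a Hv; cbn [unsingE].
  - cbn [eval]; rewrite Hv; apply get_val_singleton; reflexivity.
  - rewrite eval_letE; apply IHL; cbn [lookup fst eval].
    rewrite Hv; apply get_val_singleton; reflexivity.
Qed.

Lemma eval_decodeE T : forall L G (v : var G (mon (S L))) r x,
  depth T <= L -> lookup v r = encode T L x -> eval u0 (decodeE T L G v) r = x.
Proof.
  induction T as [| |a IHa b IHb|a IHa]; intros L G v r x HL Hv.
  - exact (eval_unsingE L G v r x Hv).
  - destruct x; reflexivity.
  - simpl in HL; destruct L as [|[|L]]; try lia.
    destruct x as [x1 x2]; cbn [decodeE eval]; rewrite !eval_letE; f_equal.
    + apply IHa; [lia|]; cbn [lookup fst eval].
      apply get_val_singleton, (eval_kfstE _ _ v r _ _ Hv).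
    + apply IHb; [lia|]; cbn [lookup fst eval].
      apply get_val_singleton, (eval_ksndE _ _ v r _ _ Hv).
  - simpl in HL; destruct L as [|L]; try lia.
    cbn [decodeE eval]; apply pred_ext; intro z; rewrite Hv; cbn [encode]; split.
    + intros [w [[y [Hy ->]] ->]].
      erewrite IHa; [exact Hy | lia | reflexivity].
    + intro Hz; exists (encode a L z); split; [eauto|].
      symmetry; apply IHa; [lia | reflexivity].
Qed.

End DecodeSemantics.

Fixpoint eqF (n : nat) : forall G, var G (mon n) -> var G (mon n) -> d0 G :=
  match n return forall G, var G (mon n) -> var G (mon n) -> d0 G with
  | 0 => fun G a b => FEqU (TmVar a) (TmVar b)
  | S n => fun G a b =>
      FAnd (FForallIn (TmVar a) (FExistsIn (TmVar (Vs _ b)) (eqF n _ (Vs _ (Vz _ _)) (Vz _ _))))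
           (FForallIn (TmVar b) (FExistsIn (TmVar (Vs _ a)) (eqF n _ (Vz _ _) (Vs _ (Vz _ _)))))
  end.

Definition singF {G n} (w : var G (TSet (mon n))) (A : var G (mon n)) : d0 G :=
  FAnd (FForallIn (TmVar w) (eqF n _ (Vz _ _) (Vs _ A)))
       (FExistsIn (TmVar w) (eqF n _ (Vz _ _) (Vs _ A))).

Definition pairF {G n} (w : var G (TSet (mon n))) (A B : var G (mon n)) : d0 G :=
  FAnd (FForallIn (TmVar w) (FOr (eqF n _ (Vz _ _) (Vs _ A)) (eqF n _ (Vz _ _) (Vs _ B))))
       (FAnd (FExistsIn (TmVar w) (eqF n _ (Vz _ _) (Vs _ A)))
             (FExistsIn (TmVar w) (eqF n _ (Vz _ _) (Vs _ B)))).

Definition kpairF {G n} (y : var G (TSet (TSet (mon n)))) (A B : var G (mon n)) : d0 G :=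
  FAnd (FForallIn (TmVar y) (FOr (singF (Vz _ _) (Vs _ A)) (pairF (Vz _ _) (Vs _ A) (Vs _ B))))
       (FAnd (FExistsIn (TmVar y) (singF (Vz _ _) (Vs _ A)))
             (FExistsIn (TmVar y) (pairF (Vz _ _) (Vs _ A) (Vs _ B)))).

Fixpoint iter_singF (L : nat) : forall G, var G (mon (S L)) -> d0 G :=
  match L return forall G, var G (mon (S L)) -> d0 G with
  | 0 => fun G v => FExistsIn (TmVar v) (@singF _ 0 (Vs _ v) (Vz _ _))
  | S L => fun G v =>
      FExistsIn (TmVar v) (FAnd (iter_singF L _ (Vz _ _)) (@singF _ (S L) (Vs _ v) (Vz _ _)))
  end.

Fixpoint imageF (T : ty) : forall L G, var G (mon (S L)) -> d0 G :=
  match T with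
  | TUr => iter_singF
  | TUnit => fun L G v => FForallIn (TmVar v) (FFalse _)
  | TSet a => fun L =>
      match L return forall G, var G (mon (S L)) -> d0 G with
      | 0 => fun G _ => FFalse G
      | S L' => fun G v => FForallIn (TmVar v) (imageF a L' _ (Vz _ _))
      end
  | TProd a b => fun L =>
      match L return forall G, var G (mon (S L)) -> d0 G with
      | S (S L') => fun G y =>
          (* y = {{A},{A,B}} with codes A, B taken from witnesses s, t in y *)
          FExistsIn (TmVar y) (FExistsIn (TmVar (Vz _ _))
            (FExistsIn (TmVar (Vs _ (Vs _ y))) (FExistsIn (TmVar (Vz _ _))
              (FAnd (imageF a L' _ (Vs _ (Vs _ (Vz _ _))))
                (FAnd (imageF b L' _ (Vz _ _))
                  (@kpairF _ (S L') (Vs _ (Vs _ (Vs _ (Vs _ y)))) (Vs _ (Vs _ (Vz _ _))) (Vz _ _)))))))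
      | _ => fun G _ => FFalse G
      end
  end.

Section Delta0Semantics.
Variable U : Type.

Lemma holds_eqF n : forall G (a b : var G (mon n)) (r : env U G),
  holds (eqF n G a b) r <-> lookup a r = lookup b r.
Proof.
  induction n as [|n IHn]; intros G a b r; cbn [eqF holds teval].
  - reflexivity.
  - setoid_rewrite IHn; cbn [lookup fst snd]; split.
    + intros [Hab Hba]; apply pred_ext; intro x; split; intro Hx.
      * destruct (Hab x Hx) as [y [Hy ->]]; exact Hy.
      * destruct (Hba x Hx) as [y [Hy <-]]; exact Hy.
    + intros E; split; intros x Hx; exists x; split; auto; congruence.
Qed.

Lemma holds_singF {G n} (w : var G (TSet (mon n))) (A : var G (mon n)) (r : env U G) :
  holds (singF w A) r <-> lookup w r = (fun u => u = lookup A r).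
Proof.
  unfold singF; cbn [holds teval]; setoid_rewrite holds_eqF; cbn [lookup fst snd]; split.
  - intros [H1 [x [Hx ->]]]; apply pred_ext; intro u; split; [apply H1 | intros ->; exact Hx].
  - intros ->; split; [auto | exists (lookup A r); auto].
Qed.

Lemma holds_pairF {G n} (w : var G (TSet (mon n))) (A B : var G (mon n)) (r : env U G) :
  holds (pairF w A B) r <-> lookup w r = (fun u => u = lookup A r \/ u = lookup B r).
Proof.
  unfold pairF; cbn [holds teval]; setoid_rewrite holds_eqF; cbn [lookup fst snd]; split.
  - intros [H1 [[x [Hx ->]] [y [Hy ->]]]]; apply pred_ext; intro u; split; [apply H1|].
    intros [-> | ->]; assumption.
  - intros ->; split; [auto | split; [exists (lookup A r) | exists (lookup B r)]; auto].
Qed.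

Lemma holds_kpairF {G n} (y : var G (TSet (TSet (mon n)))) (A B : var G (mon n)) (r : env U G) :
  holds (kpairF y A B) r <-> lookup y r = kpair (lookup A r) (lookup B r).
Proof.
  unfold kpairF, kpair; cbn [holds teval].
  setoid_rewrite holds_singF; setoid_rewrite holds_pairF; cbn [lookup fst snd]; split.
  - intros [H1 [[x [Hx ->]] [z [Hz ->]]]]; apply pred_ext; intro u; split; [apply H1|].
    intros [-> | ->]; assumption.
  - intros ->; split; [auto | split].
    + exists (fun u => u = lookup A r); auto.
    + exists (fun u => u = lookup A r \/ u = lookup B r); auto.
Qed.

Lemma holds_iter_singF L : forall G (v : var G (mon (S L))) (r : env U G),
  holds (iter_singF L G v) r <-> exists a, lookup v r = iter_sing L a.
Proof.
  induction L as [|L IHL]; intros G v r; cbn [iter_singF holds teval].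
  - setoid_rewrite holds_singF; cbn [lookup fst snd iter_sing]; split.
    + intros [x [_ E]]; eauto.
    + intros [a E]; exists a; split; [rewrite E|]; auto.
  - setoid_rewrite IHL; setoid_rewrite holds_singF; cbn [lookup fst snd iter_sing]; split.
    + intros [x [_ [[a ->] E]]]; eauto.
    + intros [a E]; exists (iter_sing L a); rewrite E; eauto.
Qed.

Lemma holds_imageF T : forall L G (v : var G (mon (S L))) (r : env U G),
  depth T <= L -> holds (imageF T L G v) r <-> exists x, lookup v r = encode T L x.
Proof.
  induction T as [| |a IHa b IHb|a IHa]; intros L G v r HL.
  - apply holds_iter_singF.
  - cbn [imageF holds teval encode]; split.
    + intro H; exists tt; apply pred_ext; intro u; split; [apply H | tauto].
    + intros [_ ->]; auto.
  - simpl in HL; destruct L as [|[|L]]; try lia.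
    cbn [imageF holds teval].
    setoid_rewrite IHa; [|lia]; setoid_rewrite IHb; [|lia].
    setoid_rewrite holds_kpairF; cbn [lookup fst snd encode]; split.
    + intros [s [_ [A [_ [t [_ [B [_ [[x1 ->] [[x2 ->] E]]]]]]]]]].
      exists (x1, x2); exact E.
    + intros [[x1 x2] E]; cbn [fst snd] in E; rewrite E; unfold kpair.
      exists (fun u => u = encode a L x1); split; [auto|].
      exists (encode a L x1); split; [reflexivity|].
      exists (fun u => u = encode a L x1 \/ u = encode b L x2); split; [auto|].
      exists (encode b L x2); split; [auto|].
      split; [eauto | split; [eauto | reflexivity]].
  - simpl in HL; destruct L as [|L]; try lia.
    cbn [imageF holds teval]; setoid_rewrite IHa; [|lia]; cbn [lookup fst snd encode]; split.
    + intro H; exists (fun x => lookup v r (encode a L x)); apply pred_ext; intro w; split.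
      * intro Hw; destruct (H w Hw) as [x ->]; eauto.
      * intros [x [Hx ->]]; exact Hx.
    + intros [X ->] w [x [_ ->]]; eauto.
Qed.

End Delta0Semantics.

Theorem mainTheorem5 :
  forall T : ty, exists d : nat,
  exists (conv : expr [T] (mon d)) (inv : expr [mon d] T) (im : d0 [mon d]),
    get_free conv /\
    forall (U : Type) (u0 : U),
      (forall x1 x2 : sem U T,
          eval u0 conv (x1, tt) = eval u0 conv (x2, tt) -> x1 = x2) /\
      (forall x : sem U T, eval u0 inv (eval u0 conv (x, tt), tt) = x) /\
      (forall y : sem U (mon d),
          holds im (y, tt) <-> exists x : sem U T, y = eval u0 conv (x, tt)).
Proof.
  intro T; set (L := depth T); exists (S L).
  exists (encodeE T L [T] (EVar (Vz [] T))),
         (decodeE T L [mon (S L)] (Vz [] _)),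
         (imageF T L [mon (S L)] (Vz [] _)).
  split; [apply get_free_encodeE; exact I|].
  intros U u0.
  assert (Hdec : forall x : sem U T,
             eval u0 (decodeE T L _ (Vz [] _)) (eval u0 (encodeE T L _ (EVar (Vz [] T))) (x, tt), tt) = x).
  { intro x; apply eval_decodeE; [reflexivity|].
    cbn [lookup fst]; rewrite eval_encodeE; reflexivity. }
  split; [|split; [exact Hdec|]].
  - intros x1 x2 E; rewrite <- (Hdec x1), <- (Hdec x2), E; reflexivity.
  - intro y; rewrite holds_imageF by reflexivity.
    setoid_rewrite eval_encodeE; reflexivity.
Qed.
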